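(* Assume the following statement holds: for every complex sequence $(b_n)_{n\geq 0}$ such that for some integer $l\geq 1$ one has $b_nb_{n+l}=0$ for all $n\geq 0$, if $a_n:=\sum_{k=0}^n(-1)^{n-k}\binom{n}{k}b_k$ satisfies $\lim_{n\to\infty}a_n=0$, then $b_n=0$ for all $n$. Then, for any $\theta>0$: if $\mathcal{P}=\sum_{p,q=0}^\infty a_{p,q}x^py^q\in A^\infty(\mathbb{R}^2_\theta)$ satisfies $\mathcal{P}^2=\mathcal{P}=\mathcal{P}^*$ and there is $k\in\mathbb{N}$ such that $a_{p,q}=0$ for all $(p,q)$ with $|p-q|>k$, then $\mathcal{P}=0$ or $\mathcal{P}=1$.
   Context: $A^\infty(\mathbb{R}^2_\theta)$ is the algebra of formal series $\sum_{p,q\geq 0}a_{p,q}x^py^q$, $a_{p,q}\in\mathbb{C}$, whose coefficient function $(p,q)\mapsto a_{p,q}$ is of Schwartz class on $\mathbb{N}^2$ (for every $r\geq1$ there is $C_r$ with $\sup_{p,q}(1+p^2+q^2)^r|a_{p,q}|<C_r$), where $x,y$ are self-adjoint with $[x,y]=xy-yx=-i\theta$, i.e. $yx=xy+i\theta$; products are computed by reordering into the normal form $x^py^q$ using this relation, and the adjoint is determined by $(a\,x^py^q)^*=\bar a\,y^qx^p$ (then reordered). *)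

From Stdlib Require Import Reals Arith.
From Coquelicot Require Export Coquelicot.
Open Scope R_scope.

Fixpoint binom (n k : nat) : nat :=
  match n, k with
  | _, O => 1%nat
  | O, S _ => 0%nat
  | S n', S k' => (binom n' k' + binom n' (S k'))%nat
  end.

Fixpoint cpow (z : C) (n : nat) : C :=
  match n with O => RtoC 1 | S n' => Cmult z (cpow z n') end.

Fixpoint csum (f : nat -> C) (n : nat) : C :=
  match n with O => f O | S n' => Cplus (csum f n') (f (S n')) end.

Definition absdiff (p q : nat) : nat := (p - q + (q - p))%nat.

(* An element of A^oo(R^2_theta) is represented by its coefficient function
   (p,q) |-> a_{p,q} of the normally ordered series sum a_{p,q} x^p y^q. *)
Definition coefs := nat -> nat -> C.

Definition schwartz (a : coefs) : Prop :=
  forall r : nat, (1 <= r)%nat ->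
    exists Cr : R, forall p q : nat,
      (1 + INR p ^ 2 + INR q ^ 2) ^ r * Cmod (a p q) < Cr.

(* i*theta = [y,x] = yx - xy *)
Definition itheta (theta : R) : C := Cmult Ci (RtoC theta).

(* normal ordering:  y^q x^r = sum_j j! C(q,j) C(r,j) (i theta)^j x^(r-j) y^(q-j) *)
Definition reorder (theta : R) (q r j : nat) : C :=
  Cmult (RtoC (INR (fact j * binom q j * binom r j))) (cpow (itheta theta) j).

(* j-th term (contraction order j) of the (m,n) coefficient of the product a*b:
   contributions of a_{p,q'} x^p y^q' * b_{r',s} x^r' y^s with p + r' - j = m,
   q' + s - j = n, i.e. q' = n - s + j, r' = m - p + j, for p <= m, s <= n. *)
Definition prod_term (theta : R) (a b : coefs) (m n j : nat) : C :=
  csum (fun p => csum (fun s =>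
      Cmult (Cmult (a p (n - s + j)%nat) (b (m - p + j)%nat s))
            (reorder theta (n - s + j) (m - p + j) j)) n) m.

Definition is_product (theta : R) (a b c : coefs) : Prop :=
  forall m n : nat, is_series (fun j => prod_term theta a b m n j) (c m n).

(* c = a^* : (a x^p y^q)^* = conj(a) y^q x^p, reordered; contributions to
   x^m y^n come from p = m + j, q = n + j. *)
Definition is_adjoint (theta : R) (a c : coefs) : Prop :=
  forall m n : nat,
    is_series (fun j => Cmult (Cconj (a (m + j)%nat (n + j)%nat))
                              (reorder theta (n + j) (m + j) j)) (c m n).

Definition zero_coefs : coefs := fun _ _ => RtoC 0.
Definition one_coefs : coefs :=
  fun p q => match p, q with O, O => RtoC 1 | _, _ => RtoC 0 end.

Definition binom_transform (b : nat -> C) (n : nat) : C :=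
  csum (fun k => Cmult (Cmult (cpow (RtoC (-1)) (n - k)) (RtoC (INR (binom n k)))) (b k)) n.

Definition SequenceHypothesis : Prop :=
  forall b : nat -> C,
    (exists l : nat, (1 <= l)%nat /\ forall n : nat, Cmult (b n) (b (n + l)%nat) = RtoC 0) ->
    filterlim (binom_transform b) eventually (locally (RtoC 0)) ->
    forall n : nat, b n = RtoC 0.

(* Represent x and y on polynomials in t by x = t and y = i theta d/dt.  If D is the
   highest band of P carrying a nonzero coefficient a_{q+D,q}, the coefficient F(M) of
   t^(M+D) in P t^M is multiplicative: F(N+D) F(N) is the corresponding quantity for
   the band 2D of P^2 = P, which is zero when D > 0.  The binomial transform of F is
   q! (i theta)^q a_{q+D,q}, up to a factor >= 1 a term of the convergent series giving
   the coefficient a_{D,0} of P^*, so it tends to 0; the assumed statement forces F = 0,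
   hence the band vanishes.  Descending, and doing the same for the image of P under the
   anti-automorphism exchanging x and y, only the diagonal is left.  There F^2 = F, so F
   is {0,1}-valued; its binomial transform is then integer-valued and tends to 0, hence
   finitely supported, so F is a bounded polynomial in N, hence constant. *)

From Stdlib Require Import Reals Arith Lia Lra FunctionalExtensionality.
From Coquelicot Require Import Coquelicot.
Open Scope R_scope.
Open Scope C_scope.

Local Notation natC n := (RtoC (INR n)).

Lemma binom_small n k : (n < k)%nat -> binom n k = 0%nat.
Proof.
  revert k; induction n; intros [|k] Hk; cbn; try lia.
  rewrite !IHn by lia; reflexivity.
Qed.

Lemma binom_n_0 n : binom n 0 = 1%nat.
Proof. now destruct n. Qed.

Lemma binom_n_1 n : binom n 1 = n.
Proof. induction n; cbn; rewrite ?IHn, ?binom_n_0; lia. Qed.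

Lemma binom_n_n n : binom n n = 1%nat.
Proof. induction n; cbn; rewrite ?IHn, ?binom_small; lia. Qed.

Lemma binom_pos n k : (k <= n)%nat -> (1 <= binom n k)%nat.
Proof.
  revert k; induction n; intros [|k] Hk; cbn; try lia.
  specialize (IHn k ltac:(lia)); lia.
Qed.

Lemma binom_succ n k :
  binom (S n) k = (binom n k + match k with O => O | S k' => binom n k' end)%nat.
Proof. destruct k; cbn; rewrite ?binom_n_0; lia. Qed.

Lemma binom_mult_sub n k : (binom n k * (n - k))%nat = (binom n (S k) * S k)%nat.
Proof.
  revert k; induction n; intros k; [destruct k; cbn; lia|].
  destruct k as [|k]; [rewrite binom_n_1, binom_n_0; lia|].
  destruct (le_lt_dec (S k) n).
  - cbn [binom]. pose proof (IHn k); pose proof (IHn (S k)).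
    replace (S n - S k)%nat with (S (n - S k)) by lia.
    replace (n - k)%nat with (S (n - S k)) in * by lia. nia.
  - rewrite (binom_small (S n) (S (S k))) by lia.
    replace (S n - S k)%nat with 0%nat by lia. lia.
Qed.

Fixpoint ffact (n k : nat) : nat :=
  match k with O => 1%nat | S k' => (ffact n k' * (n - k'))%nat end.

Lemma ffact_small n k : (n < k)%nat -> ffact n k = 0%nat.
Proof.
  induction k; intros Hk; [lia|cbn].
  destruct (Nat.eq_dec k n) as [->|]; [rewrite Nat.sub_diag|rewrite IHk by lia]; lia.
Qed.

Lemma ffact_fact n k : ffact n k = (fact k * binom n k)%nat.
Proof.
  induction k; cbn [ffact]; [rewrite binom_n_0; reflexivity|].
  rewrite IHk, <- Nat.mul_assoc, binom_mult_sub. cbn [fact]. lia.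
Qed.

Lemma natC_plus m n : natC (m + n) = natC m + natC n.
Proof. now rewrite plus_INR, RtoC_plus. Qed.

Lemma natC_mult m n : natC (m * n) = natC m * natC n.
Proof. now rewrite mult_INR, RtoC_mult. Qed.

Lemma Cmod_natC n : Cmod (natC n) = INR n.
Proof. rewrite Cmod_R. apply Rabs_pos_eq, pos_INR. Qed.

Lemma cpow_add z m n : cpow z (m + n) = cpow z m * cpow z n.
Proof. induction m; cbn; [ring|rewrite IHm; ring]. Qed.

Lemma Cmod_cpow z n : Cmod (cpow z n) = (Cmod z ^ n)%R.
Proof. induction n; cbn; [apply Cmod_1|now rewrite Cmod_mult, IHn]. Qed.

Lemma Cmod_itheta th : 0 < th -> Cmod (itheta th) = th.
Proof. intros Hth. unfold itheta. rewrite Cmod_mult, Cmod_Ci, Cmod_R, Rabs_pos_eq; lra. Qed.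

Lemma csum_ext (f g : nat -> C) n :
  (forall i, (i <= n)%nat -> f i = g i) -> csum f n = csum g n.
Proof.
  induction n; intros H; cbn; [apply H; lia|].
  rewrite IHn, H; auto.
Qed.

Lemma csum_zero (f : nat -> C) n : (forall i, (i <= n)%nat -> f i = 0) -> csum f n = 0.
Proof.
  induction n; intros H; cbn [csum]; [apply H; lia|].
  rewrite IHn, H by auto. ring.
Qed.

Lemma csum_plus (f g : nat -> C) n : csum (fun i => f i + g i) n = csum f n + csum g n.
Proof. induction n; cbn [csum]; [|rewrite IHn]; ring. Qed.

Lemma csum_mult_l (c : C) (f : nat -> C) n : c * csum f n = csum (fun i => c * f i) n.
Proof. induction n; cbn [csum]; [|rewrite <- IHn]; ring. Qed.

Lemma csum_mult_r (c : C) (f : nat -> C) n : csum f n * c = csum (fun i => f i * c) n.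
Proof. induction n; cbn [csum]; [|rewrite <- IHn]; ring. Qed.

Lemma csum_mult_csum (f g : nat -> C) m n :
  csum f m * csum g n = csum (fun i => csum (fun j => f i * g j) n) m.
Proof.
  rewrite csum_mult_r. apply csum_ext. intros i _. apply csum_mult_l.
Qed.

Lemma csum_swap (f : nat -> nat -> C) m n :
  csum (fun i => csum (fun j => f i j) n) m = csum (fun j => csum (fun i => f i j) m) n.
Proof. induction m; cbn [csum]; [|rewrite IHm, <- csum_plus]; reflexivity. Qed.

Lemma csum_first (f : nat -> C) n : csum f (S n) = f 0%nat + csum (fun i => f (S i)) n.
Proof. induction n; [reflexivity|]. cbn [csum] in *. rewrite IHn. ring. Qed.

Lemma csum_extend (f : nat -> C) m n :
  (m <= n)%nat -> (forall i, (m < i <= n)%nat -> f i = 0) -> csum f n = csum f m.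
Proof.
  induction n; intros Hmn H; [now replace m with 0%nat by lia|].
  destruct (Nat.eq_dec m (S n)) as [->|]; [reflexivity|].
  cbn [csum]. rewrite IHn, H by (lia || intros; apply H; lia). ring.
Qed.

Lemma csum_bounds (f : nat -> C) m n :
  (forall i, (Nat.min m n < i <= Nat.max m n)%nat -> f i = 0) -> csum f m = csum f n.
Proof.
  intros H. destruct (le_lt_dec m n).
  - symmetry. apply csum_extend; [lia|intros; apply H; lia].
  - apply csum_extend; [lia|intros; apply H; lia].
Qed.

Lemma csum_single (f : nat -> C) i0 n :
  (forall i, i <> i0 -> f i = 0) -> csum f n = if (i0 <=? n)%nat then f i0 else 0.
Proof.
  intros H. induction n; cbn [csum].
  - destruct i0; [reflexivity|apply H; lia].
  - rewrite IHn. destruct (Nat.eq_dec i0 (S n)) as [->|Hn].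
    + rewrite Nat.leb_refl, (proj2 (Nat.leb_gt (S n) n)) by lia. ring.
    + rewrite (H (S n)) by lia.
      destruct (Nat.leb_spec i0 n), (Nat.leb_spec i0 (S n)); try lia; ring.
Qed.

Lemma csum_triangle (f : nat -> nat -> C) n :
  csum (fun i => csum (fun j => f i j) i) n =
  csum (fun j => csum (fun i => if (j <=? i)%nat then f i j else 0) n) n.
Proof.
  rewrite <- csum_swap. apply csum_ext. intros i Hi.
  rewrite (csum_extend _ i n Hi).
  - apply csum_ext. intros j Hj. now rewrite (proj2 (Nat.leb_le j i)).
  - intros j Hj. now rewrite (proj2 (Nat.leb_gt j i)) by lia.
Qed.

Lemma csum_shift (f : nat -> C) s n :
  (forall i, (i < s)%nat -> f i = 0) -> csum f (s + n) = csum (fun i => f (i + s)%nat) n.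
Proof.
  intros H. induction n.
  - rewrite Nat.add_0_r. destruct s; [reflexivity|].
    cbn [csum Nat.add]. rewrite csum_zero by (intros; apply H; lia). ring.
  - rewrite Nat.add_succ_r. cbn [csum]. rewrite IHn.
    now replace (S n + s)%nat with (S (s + n)) by lia.
Qed.

Lemma ffact_normal_order_step N D s q j : (j <= q)%nat ->
  (fact j * binom q j * binom (s + D) j * ffact N (q + s - j) * (N + D - q))%nat =
  (fact j * binom q j * binom (s + D) j * ffact N (S q + s - j) +
   fact (S j) * binom q j * binom (s + D) (S j) * ffact N (q + s - j))%nat.
Proof.
  intros Hj.
  replace (S q + s - j)%nat with (S (q + s - j)) by lia. cbn [ffact fact].
  set (m := (q + s - j)%nat).
  destruct (le_lt_dec m N) as [Hm|Hm]; [|rewrite (ffact_small N m Hm); lia].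
  destruct (le_lt_dec j (s + D)) as [Hl|Hl];
    [|rewrite (binom_small (s + D) j), (binom_small (s + D) (S j)) by lia; lia].
  replace (N + D - q)%nat with ((N - m) + (s + D - j))%nat by lia.
  pose proof (binom_mult_sub (s + D) j) as Habs.
  transitivity (fact j * binom q j * ffact N m * (binom (s + D) j * (N - m)) +
                fact j * binom q j * ffact N m * (binom (s + D) j * (s + D - j)))%nat; [ring|].
  rewrite Habs. ring.
Qed.

(* The normal-ordering formula behind [reorder], with [y^q x^(s+D) y^s] applied
   to [t^N] in the representation [x = t], [y = d/dt]. *)
Lemma ffact_normal_order N D s q :
  natC (ffact N s * ffact (N + D) q) =
  csum (fun j => natC (fact j * binom q j * binom (s + D) j * ffact N (q + s - j))) q.
Proof.
  induction q.
  - cbn [csum ffact]. rewrite !binom_n_0, Nat.add_0_l, Nat.sub_0_r. cbn [fact].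
    do 2 f_equal. lia.
  - cbn [ffact]. rewrite Nat.mul_assoc, natC_mult, IHq, csum_mult_r.
    rewrite (csum_ext _ (fun j =>
        natC (fact j * binom q j * binom (s + D) j * ffact N (S q + s - j)) +
        natC (fact (S j) * binom q j * binom (s + D) (S j) * ffact N (q + s - j)))).
    2: intros j Hj; now rewrite <- natC_mult, <- natC_plus, ffact_normal_order_step.
    rewrite csum_plus.
    rewrite (csum_ext (fun j => natC (fact j * binom (S q) j * _ * _)) (fun j =>
        natC (fact j * binom q j * binom (s + D) j * ffact N (S q + s - j)) +
        natC (fact j * match j with O => O | S k => binom q k end * binom (s + D) j *
              ffact N (S q + s - j)))).
    2: intros j _; rewrite <- natC_plus, binom_succ; f_equal; f_equal; lia.
    rewrite csum_plus. f_equal.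
    + symmetry. apply csum_extend; [lia|]. intros j Hj.
      now rewrite (binom_small q j), Nat.mul_0_r, !Nat.mul_0_l by lia.
    + rewrite csum_first, Nat.mul_0_r, !Nat.mul_0_l, Cplus_0_l.
      apply csum_ext. intros j _. now replace (S q + s - S j)%nat with (q + s - j)%nat by lia.
Qed.

Lemma reorder_sym th q r j : reorder th q r j = reorder th r q j.
Proof. unfold reorder. do 3 f_equal. lia. Qed.

Lemma reorder_small th q r j : (r < j)%nat -> reorder th q r j = 0.
Proof. intros H. unfold reorder. rewrite (binom_small r j H), Nat.mul_0_r. cbn. ring. Qed.

(* In the representation [x = t], [y = i theta d/dt] one has
   [x^(q+D) y^q t^M = (i theta)^q ffact M q t^(M+D)], so [band_symbol th u M] is the
   coefficient of [t^(M+D)] in [sum_q u q x^(q+D) y^q] applied to [t^M]. *)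
Definition band_symbol (th : R) (u : nat -> C) (M : nat) : C :=
  csum (fun q => u q * cpow (itheta th) q * natC (ffact M q)) M.

(* The coefficient of [x^(n+2D) y^n] in the product of [sum_q u q x^(q+D) y^q] and
   [sum_q v q x^(q+D) y^q]. *)
Definition band_product (th : R) (u v : nat -> C) (D n : nat) : C :=
  csum (fun j => csum (fun s =>
    u (n - s + j)%nat * v s * reorder th (n - s + j) (s + D) j) n) (n + D).

Section BandSymbolMult.
Variables (th : R) (u v : nat -> C) (D : nat).

Let lhs_term N s q j := u q * v s * cpow (itheta th) q * cpow (itheta th) s *
  natC (fact j * binom q j * binom (s + D) j * ffact N (q + s - j)).

Let rhs_term N n j s := u (n - s + j)%nat * v s * reorder th (n - s + j) (s + D) j *
  cpow (itheta th) n * natC (ffact N n).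

Lemma band_symbol_mult_expand N : band_symbol th u (N + D) * band_symbol th v N =
  csum (fun s => csum (fun j => csum (fun q => lhs_term N s q j) (N + D)) (N + D)) N.
Proof.
  unfold band_symbol. rewrite csum_mult_csum, csum_swap. apply csum_ext. intros s Hs.
  rewrite (csum_swap (fun j q => lhs_term N s q j)). apply csum_ext. intros q Hq.
  rewrite (csum_extend _ q (N + D)) by (try lia; intros j Hj; unfold lhs_term;
    rewrite (binom_small q j), Nat.mul_0_r, !Nat.mul_0_l by lia; cbn; ring).
  unfold lhs_term. rewrite <- csum_mult_l, <- ffact_normal_order, natC_mult. ring.
Qed.

Lemma band_symbol_band_product_expand N :
  band_symbol th (band_product th u v D) N =
  csum (fun s => csum (fun j =>
    csum (fun n => if (s <=? n)%nat then rhs_term N n j s else 0) N) (N + D)) N.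
Proof.
  unfold band_symbol, band_product.
  rewrite (csum_ext _ (fun n => csum (fun s => csum (fun j => rhs_term N n j s) (N + D)) n)).
  2:{ intros n Hn. rewrite !csum_mult_r, <- (csum_extend _ (n + D) (N + D)).
      - rewrite csum_swap. apply csum_ext. intros s _. rewrite !csum_mult_r.
        apply csum_ext. intros j _. unfold rhs_term. ring.
      - lia.
      - intros j Hj. rewrite csum_zero; [ring|]. intros s Hs. rewrite reorder_small by lia. ring. }
  rewrite csum_triangle. apply csum_ext. intros s _.
  rewrite <- csum_swap. apply csum_ext. intros n _.
  destruct (s <=? n)%nat; [reflexivity|]. symmetry. now apply csum_zero.
Qed.

Lemma lhs_rhs_reindex N s j : (s <= N)%nat -> (j <= N + D)%nat ->
  csum (fun q => lhs_term N s q j) (N + D) =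
  csum (fun n => if (s <=? n)%nat then rhs_term N n j s else 0) N.
Proof.
  intros Hs Hj.
  replace N with (s + (N - s))%nat at 2 by lia.
  replace (N + D)%nat with (j + (N + D - j))%nat at 1 by lia.
  rewrite !csum_shift.
  2: intros n Hn; now rewrite (proj2 (Nat.leb_gt s n)).
  2: intros q Hq; unfold lhs_term;
     rewrite (binom_small q j), Nat.mul_0_r, !Nat.mul_0_l by lia; cbn; ring.
  rewrite (csum_ext (fun i => if (s <=? i + s)%nat then rhs_term N (i + s) j s else 0)
                     (fun i => lhs_term N s (i + j) j)).
  2:{ intros i _. rewrite (proj2 (Nat.leb_le s (i + s))) by lia. unfold lhs_term, rhs_term, reorder.
      replace (i + s - s + j)%nat with (i + j)%nat by lia.
      replace (i + j + s - j)%nat with (i + s)%nat by lia.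
      rewrite !natC_mult, !cpow_add. ring. }
  apply csum_bounds. intros i Hi. unfold lhs_term.
  replace (i + j + s - j)%nat with (i + s)%nat by lia.
  destruct (le_lt_dec i (N - s)).
  - rewrite (binom_small (s + D) j), Nat.mul_0_r, Nat.mul_0_l by lia. cbn. ring.
  - rewrite (ffact_small N (i + s)), Nat.mul_0_r by lia. cbn. ring.
Qed.

Lemma band_symbol_mult N :
  band_symbol th u (N + D) * band_symbol th v N = band_symbol th (band_product th u v D) N.
Proof.
  rewrite band_symbol_mult_expand, band_symbol_band_product_expand.
  apply csum_ext. intros s Hs. apply csum_ext. intros j Hj. apply lhs_rhs_reindex; lia.
Qed.

End BandSymbolMult.

Definition newton (c : nat -> C) (N : nat) : C := csum (fun q => natC (binom N q) * c q) N.

Lemma newton_ext (c c' : nat -> C) N : (forall q, c q = c' q) -> newton c N = newton c' N.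
Proof. intros H. apply csum_ext. intros q _. now rewrite H. Qed.

Lemma newton_succ (c : nat -> C) N : newton c (S N) = newton c N + newton (fun q => c (S q)) N.
Proof.
  unfold newton.
  rewrite (csum_ext _ (fun q => natC (binom N q) * c q +
     natC (match q with O => O | S k => binom N k end) * c q)).
  2: intros q _; rewrite binom_succ, natC_plus; ring.
  rewrite csum_plus. f_equal.
  - cbn [csum]. rewrite binom_small by lia. change (INR 0) with 0%R. ring.
  - rewrite csum_first. change (INR 0) with 0%R. ring.
Qed.

Lemma binom_transform_ext (b b' : nat -> C) n :
  (forall k, b k = b' k) -> binom_transform b n = binom_transform b' n.
Proof. intros H. apply csum_ext. intros k _. now rewrite H. Qed.

Lemma binom_transform_succ (b : nat -> C) n :
  binom_transform b (S n) = binom_transform (fun k => b (S k) - b k) n.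
Proof.
  unfold binom_transform.
  rewrite (csum_ext _ (fun k => cpow (RtoC (-1)) (S n - k) * natC (binom n k) * b k +
     cpow (RtoC (-1)) (S n - k) * natC (match k with O => O | S k' => binom n k' end) * b k)).
  2: intros k _; rewrite binom_succ, natC_plus; ring.
  rewrite csum_plus.
  transitivity (csum (fun k => - (cpow (RtoC (-1)) (n - k) * natC (binom n k) * b k)) n +
                csum (fun k => cpow (RtoC (-1)) (n - k) * natC (binom n k) * b (S k)) n).
  - f_equal.
    + rewrite (csum_extend _ n (S n)) by
        (lia || intros k Hk; rewrite binom_small by lia; change (INR 0) with 0%R; ring).
      apply csum_ext. intros k Hk. rewrite Nat.sub_succ_l by exact Hk. cbn [cpow]. ring.
    + rewrite csum_first. change (INR 0) with 0%R. rewrite Cmult_0_r, Cmult_0_l, Cplus_0_l.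
      apply csum_ext. intros k _. reflexivity.
  - rewrite <- csum_plus. apply csum_ext. intros k _. ring.
Qed.

Lemma binom_transform_newton (c : nat -> C) n : binom_transform (newton c) n = c n.
Proof.
  revert c. induction n; intros c.
  - cbn. ring.
  - rewrite binom_transform_succ, (binom_transform_ext _ (newton (fun q => c (S q)))).
    + apply IHn.
    + intros k. rewrite newton_succ. ring.
Qed.

Lemma newton_shift_bound (c : nat -> C) B : (forall N, Cmod (newton c N) <= B) ->
  forall m N, Cmod (newton (fun q => c (q + m)%nat) N) <= 2 ^ m * B.
Proof.
  intros Hc m. induction m; intros N.
  - rewrite (newton_ext _ c) by (intros; now rewrite Nat.add_0_r).
    rewrite Rmult_1_l. apply Hc.
  - assert (E : newton (fun q => c (q + S m)%nat) N =
                newton (fun q => c (q + m)%nat) (S N) - newton (fun q => c (q + m)%nat) N).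
    { rewrite newton_succ, (newton_ext (fun q => c (S q + m)%nat) (fun q => c (q + S m)%nat))
        by (intros; now rewrite Nat.add_succ_r).
      ring. }
    rewrite E. eapply Rle_trans; [apply Cmod_triangle|]. rewrite Cmod_opp.
    pose proof (IHm (S N)). pose proof (IHm N). cbn [pow]. lra.
Qed.

Lemma newton_linear (c : nat -> C) N :
  (forall q, (1 < q)%nat -> c q = 0) -> newton c N = c 0%nat + natC N * c 1%nat.
Proof.
  intros Hc. destruct N as [|N]; [cbn; change (INR 0) with 0%R; ring|].
  unfold newton. rewrite (csum_extend _ 1 (S N)) by (lia || intros; rewrite Hc by lia; ring).
  cbn [csum]. rewrite binom_n_0, binom_n_1. cbn [INR]. ring.
Qed.

Lemma bounded_linear_slope (x y : C) K : (forall N, Cmod (x + natC N * y) <= K) -> y = 0.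
Proof.
  intros H. apply Cmod_eq_0, Rle_antisym; [|apply Cmod_ge_0].
  apply Rnot_lt_le. intros Hy.
  destruct (INR_unbounded ((K + Cmod x) / Cmod y)) as [N HN].
  assert (HNy : Cmod (natC N * y) <= K + Cmod x).
  { replace (natC N * y) with ((x + natC N * y) + - x) by ring.
    eapply Rle_trans; [apply Cmod_triangle|]. rewrite Cmod_opp. pose proof (H N). lra. }
  rewrite Cmod_mult, Cmod_natC in HNy.
  apply Rmult_lt_compat_r with (r := Cmod y) in HN; [|exact Hy].
  unfold Rdiv in HN. rewrite Rmult_assoc, Rinv_l, Rmult_1_r in HN by lra. lra.
Qed.

(* For finitely supported [c], [newton c] is a polynomial in [N]; bounded, it is constant. *)
Lemma newton_bounded_const (c : nat -> C) B d : (forall N, Cmod (newton c N) <= B) ->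
  (forall e, (d < e)%nat -> c e = 0) -> forall e, (1 <= e)%nat -> c e = 0.
Proof.
  intros Hc. induction d; intros Hd e He; [apply Hd; lia|].
  assert (Hlast : c (S d) = 0).
  { apply (bounded_linear_slope (c d) _ (2 ^ d * B)). intros N.
    pose proof (newton_shift_bound c B Hc d N) as HN.
    rewrite (newton_linear (fun q => c (q + d)%nat)) in HN by (intros q Hq; apply Hd; lia).
    exact HN. }
  apply IHd; [|exact He]. intros e' He'.
  destruct (Nat.eq_dec e' (S d)) as [->|]; [exact Hlast|apply Hd; lia].
Qed.

Definition is_int (z : C) : Prop := exists n : Z, z = RtoC (IZR n).

Lemma is_int_plus x y : is_int x -> is_int y -> is_int (x + y).
Proof. intros [m ->] [n ->]. exists (m + n)%Z. now rewrite plus_IZR, RtoC_plus. Qed.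

Lemma is_int_mult x y : is_int x -> is_int y -> is_int (x * y).
Proof. intros [m ->] [n ->]. exists (m * n)%Z. now rewrite mult_IZR, RtoC_mult. Qed.

Lemma is_int_natC n : is_int (natC n).
Proof. exists (Z.of_nat n). now rewrite INR_IZR_INZ. Qed.

Lemma is_int_sign n : is_int (cpow (RtoC (-1)) n).
Proof. induction n; [now exists 1%Z|]. apply is_int_mult; [now exists (-1)%Z|exact IHn]. Qed.

Lemma is_int_csum (f : nat -> C) n : (forall k, is_int (f k)) -> is_int (csum f n).
Proof. intros Hf. induction n; [apply Hf|apply is_int_plus; auto]. Qed.

Lemma is_int_binom_transform (b : nat -> C) n :
  (forall k, is_int (b k)) -> is_int (binom_transform b n).
Proof.
  intros Hb. apply is_int_csum. intros k.
  repeat apply is_int_mult; auto using is_int_sign, is_int_natC.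
Qed.

Lemma is_int_small z : is_int z -> Cmod z < 1 -> z = 0.
Proof.
  intros [n ->] H. rewrite Cmod_R in H. apply Rabs_def2 in H.
  now rewrite (one_IZR_lt1 n) by lra.
Qed.

Definition band_coef (th : R) (u : nat -> C) (q : nat) : C :=
  natC (fact q) * cpow (itheta th) q * u q.

Lemma band_symbol_newton th (u : nat -> C) :
  forall N, band_symbol th u N = newton (band_coef th u) N.
Proof.
  intros N. apply csum_ext. intros q _. unfold band_coef. rewrite ffact_fact, natC_mult. ring.
Qed.

Lemma binom_transform_band_symbol th (u : nat -> C) n :
  binom_transform (band_symbol th u) n = band_coef th u n.
Proof.
  rewrite (binom_transform_ext _ _ _ (band_symbol_newton th u)).
  apply binom_transform_newton.
Qed.

Lemma band_coef_eq0 th (u : nat -> C) q : 0 < th -> band_coef th u q = 0 -> u q = 0.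
Proof.
  intros Hth H. apply Cmod_eq_0. unfold band_coef in H.
  apply (f_equal Cmod) in H. rewrite !Cmod_mult, Cmod_natC, Cmod_cpow, Cmod_itheta, Cmod_0 in H
    by exact Hth.
  pose proof (INR_fact_neq_0 q). pose proof (pow_lt th q Hth).
  apply Rmult_integral in H as [H|H]; [|exact H].
  apply Rmult_integral in H as [H|H]; lra.
Qed.

Lemma sum_n_csum (g : nat -> C) n : sum_n g n = csum g n.
Proof. induction n; [now rewrite sum_O|]. now rewrite sum_Sn, IHn. Qed.

Lemma is_series_finite (g : nat -> C) (l : C) M :
  is_series g l -> (forall j, (M < j)%nat -> g j = 0) -> l = csum g M.
Proof.
  intros Hs Hz.
  assert (Hfin : is_series g (csum g M)).
  { apply filterlim_ext_loc with (f := fun _ => csum g M); [|apply filterlim_const].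
    exists M. intros n Hn. rewrite sum_n_csum. symmetry.
    apply csum_extend; [lia|]. intros i Hi. apply Hz. lia. }
  exact (filterlim_locally_unique (sum_n g) l (csum g M) Hs Hfin).
Qed.

Lemma is_series_term_small (g : nat -> C) (l : C) :
  is_series g l -> forall eps, 0 < eps -> exists N, forall n, (N <= n)%nat -> Cmod (g n) < eps.
Proof.
  intros Hs eps Heps.
  destruct (Cauchy_ex_series g (ex_intro _ l Hs) (mkposreal eps Heps)) as [N HN].
  exists N. intros n Hn. specialize (HN n n Hn Hn). now rewrite sum_n_n in HN.
Qed.

Lemma filterlim_C0 (f : nat -> C) :
  (forall eps, 0 < eps -> exists N, forall n, (N <= n)%nat -> Cmod (f n) < eps) ->
  filterlim f eventually (locally (RtoC 0)).
Proof.
  intros H. apply filterlim_locally. intros eps.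
  destruct (H eps (cond_pos eps)) as [N HN]. exists N. intros n Hn.
  apply (@norm_compat1 C_AbsRing C_NormedModule).
  change (Cmod (f n - 0) < eps). replace (f n - 0) with (f n) by ring. exact (HN n Hn).
Qed.

Definition band (a : coefs) (D q : nat) : C := a (q + D)%nat q.

Definition vanish_above_band (a : coefs) (D : nat) : Prop :=
  forall p q, (q + D < p)%nat -> a p q = 0.

Lemma adjoint_band_coef_small th a c D : 0 < th -> is_adjoint th a c ->
  forall eps, 0 < eps ->
  exists N, forall n, (N <= n)%nat -> Cmod (band_coef th (band a D) n) < eps.
Proof.
  intros Hth Hadj eps Heps.
  destruct (is_series_term_small _ _ (Hadj D 0%nat) eps Heps) as [N HN].
  exists N. intros n Hn. eapply Rle_lt_trans; [|exact (HN n Hn)].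
  unfold band_coef, band, reorder. cbn [Nat.add].
  rewrite !Cmod_mult, Cmod_conj, !Cmod_natC, Cmod_cpow, binom_n_n, (Nat.add_comm D n), !mult_INR.
  set (P := (INR (fact n) * Cmod (itheta th) ^ n * Cmod (a (n + D)%nat n))%R).
  assert (HP : 0 <= P).
  { apply Rmult_le_pos; [apply Rmult_le_pos|]; auto using pos_INR, pow_le, Cmod_ge_0. }
  pose proof (le_INR _ _ (binom_pos (n + D) n (Nat.le_add_r n D))) as Hbin.
  cbn [INR] in *. apply Rle_trans with (P * INR (binom (n + D) n))%R; [|right; unfold P; ring].
  rewrite <- (Rmult_1_r P) at 1. now apply Rmult_le_compat_l.
Qed.

Lemma product_band th a b c D :
  is_product th a b c -> vanish_above_band a D -> vanish_above_band b D ->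
  forall n, c (n + D + D)%nat n = band_product th (band a D) (band b D) D n.
Proof.
  intros Hp Ha Hb n.
  set (m := (n + D + D)%nat).
  set (g := fun j => csum (fun s => a (n - s + j + D)%nat (n - s + j)%nat * b (s + D)%nat s *
                                    reorder th (n - s + j) (s + D) j) n).
  assert (Hg : forall j, prod_term th a b m n j = g j).
  { intros j. unfold prod_term, g. rewrite csum_swap. apply csum_ext. intros s Hs.
    rewrite (csum_single _ (n - s + j + D)%nat m).
    - destruct (Nat.leb_spec (n - s + j + D) m).
      + now replace (m - (n - s + j + D) + j)%nat with (s + D)%nat by (unfold m; lia).
      + rewrite reorder_small by (unfold m; lia). ring.
    - intros p Hp'. destruct (lt_dec (n - s + j + D) p).
      + rewrite (Ha p (n - s + j)%nat) by lia. ring.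
      + rewrite (Hb (m - p + j)%nat s) by (unfold m; lia). ring. }
  rewrite (is_series_finite g _ (n + D) (is_series_ext _ _ _ Hg (Hp m n))).
  - reflexivity.
  - intros j Hj. apply csum_zero. intros s Hs. rewrite reorder_small by lia. ring.
Qed.

Lemma band_symbol_zero th (u : nat -> C) N : (forall q, u q = 0) -> band_symbol th u N = 0.
Proof. intros Hu. apply csum_zero. intros q _. rewrite Hu. ring. Qed.

Lemma Cidempotent_01 (z : C) : z * z = z -> z = 0 \/ z = 1.
Proof.
  intros H. destruct (Ceq_dec z 0) as [|Hz]; [now left|right].
  destruct (Ceq_dec (z - 1) 0) as [E|E].
  - replace z with (z - 1 + 1) by ring. rewrite E. ring.
  - exfalso. apply (Cmult_neq_0 z (z - 1) Hz E).
    replace (z * (z - 1)) with (z * z - z) by ring. rewrite H. ring.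
Qed.

Section Projection.
Variables (th : R) (a : coefs).
Hypotheses (Hth : 0 < th) (Hsq : is_product th a a a) (Hadj : is_adjoint th a a).

Lemma band_symbol_mult_self D N :
  vanish_above_band a D ->
  band_symbol th (band a D) (N + D) * band_symbol th (band a D) N =
  band_symbol th (band a (D + D)) N.
Proof.
  intros HD. rewrite band_symbol_mult. unfold band_symbol. apply csum_ext. intros n _.
  rewrite <- product_band with (a := a) (c := a) by assumption.
  unfold band. now rewrite Nat.add_assoc.
Qed.

Lemma top_band_vanishes (Hseq : SequenceHypothesis) D :
  vanish_above_band a (S D) -> vanish_above_band a D.
Proof.
  intros HD.
  set (u := band a (S D)).
  assert (Hmul : forall N, band_symbol th u N * band_symbol th u (N + S D) = 0).
  { intros N. rewrite Cmult_comm. unfold u. rewrite band_symbol_mult_self by exact HD.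
    apply band_symbol_zero. intros q. apply HD. lia. }
  assert (Hlim : filterlim (binom_transform (band_symbol th u)) eventually (locally (RtoC 0))).
  { apply filterlim_C0. intros eps Heps.
    destruct (adjoint_band_coef_small th a a (S D) Hth Hadj eps Heps) as [N HN].
    exists N. intros n Hn. rewrite binom_transform_band_symbol. exact (HN n Hn). }
  assert (Hsym : forall N, band_symbol th u N = 0).
  { apply Hseq; [exists (S D); split; [lia|exact Hmul]|exact Hlim]. }
  assert (Hu : forall q, u q = 0).
  { intros q. apply (band_coef_eq0 th u q Hth).
    rewrite <- binom_transform_band_symbol, (binom_transform_ext _ (fun _ => 0)) by exact Hsym.
    apply csum_zero. intros k _. ring. }
  intros p q Hpq. destruct (Nat.eq_dec p (q + S D)) as [->|Hne]; [apply Hu|apply HD; lia].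
Qed.

Lemma vanish_above_band_to_0 (Hseq : SequenceHypothesis) D :
  vanish_above_band a D -> vanish_above_band a 0.
Proof. induction D; intros HD; [exact HD|]. apply IHD, top_band_vanishes; assumption. Qed.

Lemma diag_symbol_01 N : vanish_above_band a 0 ->
  band_symbol th (band a 0) N = 0 \/ band_symbol th (band a 0) N = 1.
Proof.
  intros H0. apply Cidempotent_01.
  pose proof (band_symbol_mult_self 0 N H0) as E. now rewrite Nat.add_0_r in E.
Qed.

Lemma diag_vanishes : vanish_above_band a 0 -> forall e, (1 <= e)%nat -> a e e = 0.
Proof.
  intros H0.
  set (c := band_coef th (band a 0)).
  assert (H01 := fun N => diag_symbol_01 N H0).
  assert (Hint : forall n, is_int (c n)).
  { intros n. unfold c. rewrite <- binom_transform_band_symbol.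
    apply is_int_binom_transform. intros k.
    destruct (H01 k) as [-> | ->]; [now exists 0%Z|now exists 1%Z]. }
  assert (Hbound : forall N, Cmod (newton c N) <= 1).
  { intros N. unfold c. rewrite <- band_symbol_newton.
    destruct (H01 N) as [-> | ->]; rewrite ?Cmod_0, ?Cmod_1; lra. }
  destruct (adjoint_band_coef_small th a a 0 Hth Hadj 1 Rlt_0_1) as [M HM].
  intros e He. rewrite <- (Nat.add_0_r e) at 1. apply (band_coef_eq0 th _ e Hth).
  apply (newton_bounded_const c 1 M Hbound); [|exact He].
  intros n Hn. apply is_int_small; [apply Hint|apply HM; lia].
Qed.

End Projection.

Definition transpose (a : coefs) : coefs := fun p q => a q p.

Lemma is_product_transpose th a b c :
  is_product th a b c -> is_product th (transpose b) (transpose a) (transpose c).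
Proof.
  intros Hp m n. apply (is_series_ext (fun j => prod_term th a b n m j)); [|apply Hp].
  intros j. unfold prod_term, transpose. rewrite csum_swap.
  apply csum_ext. intros s _. apply csum_ext. intros p _. rewrite reorder_sym. ring.
Qed.

Lemma is_adjoint_transpose th a c : is_adjoint th a c -> is_adjoint th (transpose a) (transpose c).
Proof.
  intros Hadj m n.
  exact (is_series_ext _ _ _ (fun j => f_equal _ (reorder_sym th _ _ j)) (Hadj n m)).
Qed.

Lemma band_symbol_0 th (u : nat -> C) : band_symbol th u 0 = u 0%nat.
Proof. cbn. ring. Qed.

Lemma coefs_scalar a : vanish_above_band a 0 -> vanish_above_band (transpose a) 0 ->
  (forall e, (1 <= e)%nat -> a e e = 0) -> forall p q, a p q = one_coefs p q * a 0%nat 0%nat.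
Proof.
  intros Hlow Hup Hdiag p q.
  destruct (lt_eq_lt_dec p q) as [[Hpq| ->]|Hpq].
  - change (a p q) with (transpose a q p). rewrite Hup by lia. destruct p, q; cbn; try lia; ring.
  - destruct q; cbn; [ring|]. rewrite Hdiag by lia. ring.
  - rewrite (Hlow p q) by lia. destruct p, q; cbn; try lia; ring.
Qed.

Theorem theorem1p3 :
  SequenceHypothesis ->
  forall theta : R, 0 < theta ->
  forall a : coefs,
    schwartz a ->
    is_product theta a a a ->
    is_adjoint theta a a ->
    (exists k : nat, forall p q : nat, (k < absdiff p q)%nat -> a p q = RtoC 0) ->
    a = zero_coefs \/ a = one_coefs.
Proof.
  intros Hseq th Hth a _ Hsq Hadj [k Hk].
  assert (Hlow : vanish_above_band a 0).
  { apply (vanish_above_band_to_0 th a Hth Hsq Hadj Hseq k).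
    intros p q Hpq. apply Hk. unfold absdiff. lia. }
  assert (Hup : vanish_above_band (transpose a) 0).
  { apply (vanish_above_band_to_0 th (transpose a) Hth (is_product_transpose _ _ _ _ Hsq)
             (is_adjoint_transpose _ _ _ Hadj) Hseq k).
    intros p q Hpq. apply Hk. unfold absdiff. lia. }
  pose proof (coefs_scalar a Hlow Hup (diag_vanishes th a Hth Hsq Hadj Hlow)) as Ha.
  destruct (diag_symbol_01 th a Hsq 0 Hlow) as [H00|H00];
    rewrite band_symbol_0 in H00; unfold band in H00; cbn [Nat.add] in H00; [left|right];
    apply functional_extensionality; intros p; apply functional_extensionality; intros q;
    rewrite Ha, H00; destruct p, q; cbv beta iota delta [zero_coefs one_coefs]; ring.
Qed.
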